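(* Let $G=(\mathcal{V},\mathcal{E})$ be a simple connected graph and $\mathcal{R}\subseteq\mathcal{V}$ a resolution set of $G$. If a pair $\{i,j\}$ of distinct nodes is invisible with respect to $\mathcal{R}$, then $i\notin\mathcal{R}$, $j\notin\mathcal{R}$, and $\Delta_{ij}=1$. Likewise, if $\{i,j\}$ is ambiguous with respect to $\mathbf{P}_{\mathcal{R}}$, then $i\notin\mathcal{R}$, $j\notin\mathcal{R}$ and $\Delta_{ij}=1$ (computed from $\mathbf{P}_{\mathcal{R}}$).
   Context: All graphs are simple, undirected and connected. $h_{ij}$ is the shortest-path distance between nodes $i,j$. For an ordered landmark set $\mathcal{M}=\{A_1,\dots,A_m\}\subseteq\mathcal{V}$, $\mathbf{P}_{\mathcal{M}}(i)=\langle h_{iA_1},\dots,h_{iA_m}\rangle$, and $\mathbf{P}_{\mathcal{M}}$ is the matrix with these rows. $\mathcal{M}$ is a resolution set if the $\mathbf{P}_{\mathcal{M}}(i)$ are pairwise distinct. For nodes $i,j$ define $\Delta^k_{ij}=|h_{iA_k}-h_{jA_k}|$ and $\Delta_{ij}=\max_{1\le k\le m}\Delta^k_{ij}$. A pair $\{i,j\}$ is invisible with respect to $\mathcal{M}$ if adding the edge $\{i,j\}$ (when absent) or removing it (when present) does not change any entry of $\mathbf{P}_{\mathcal{M}}$. A pair $\{i,j\}$ is ambiguous with respect to a given matrix $\mathbf{P}_{\mathcal{M}}$ if there exist two simple connected graphs on $\mathcal{V}$, both having distance vector matrix $\mathbf{P}_{\mathcal{M}}$ for $\mathcal{M}$,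 such that $\{i,j\}$ is an edge of one and not of the other. *)

From mathcomp Require Import all_boot.
Set Implicit Arguments. Unset Strict Implicit. Unset Printing Implicit Defensive.

Definition simple_graph (T : finType) (e : rel T) : Prop :=
  symmetric e /\ irreflexive e.

Definition connected_graph (T : finType) (e : rel T) : Prop :=
  forall x y : T, connect e x y.

Definition walk_k (T : finType) (e : rel T) (k : nat) (x y : T) : bool :=
  [exists p : k.-tuple T, path e x p && (last x p == y)].

(* shortest-path distance h_xy (equals #|T| if y unreachable from x) *)
Definition dist (T : finType) (e : rel T) (x y : T) : nat :=
  find (fun k => walk_k e k x y) (iota 0 #|T|).

Definition dvec (T : finType) (e : rel T) (M : seq T) (i : T) : seq nat :=
  [seq dist e i A | A <- M].

Definition resolving (T : finType) (e : rel T) (M : seq T) : Prop :=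
  forall i j : T, dvec e M i = dvec e M j -> i = j.

Definition toggle (T : finType) (e : rel T) (i j : T) : rel T :=
  fun x y => if ((x == i) && (y == j)) || ((x == j) && (y == i))
             then ~~ e x y else e x y.

Definition invisible (T : finType) (e : rel T) (M : seq T) (i j : T) : Prop :=
  forall x : T, dvec (toggle e i j) M x = dvec e M x.

Definition ambiguous (T : finType) (e : rel T) (M : seq T) (i j : T) : Prop :=
  exists e1 e2 : rel T,
    [/\ simple_graph e1 /\ connected_graph e1,
        simple_graph e2 /\ connected_graph e2,
        (forall x, dvec e1 M x = dvec e M x),
        (forall x, dvec e2 M x = dvec e M x) & e1 i j != e2 i j].

Definition absdiff (m n : nat) : nat := (m - n) + (n - m).

Definition Delta (T : finType) (e : rel T) (M : seq T) (i j : T) : nat :=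
  \max_(A <- M) absdiff (dist e i A) (dist e j A).

From mathcomp Require Import all_boot.
From mathcomp Require Import zify.

(* Everything rests on two facts about the distance matrix P_R.
   (1) A landmark sees its own neighbourhood: for A in R and x <> A,
       h_xA = 1 exactly when x and A are adjacent, so two graphs with the
       same matrix P_R agree on every pair containing a landmark.
   (2) Delta_ij is computed from the rows P_R(i), P_R(j) alone; it is
       positive when R resolves the graph and i <> j, and it is at most 1
       when i and j are adjacent (triangle inequality along the edge).
   Both invisibility and ambiguity provide two graphs with matrix P_R that
   disagree on the undirected pair {i,j}; by (1) neither i nor j is a
   landmark, and since one of the two graphs contains the edge {i,j},
   (2) gives Delta_ij = 1.  The file first develops walks and the
   shortest-path distance [dist], then facts (1) and (2), then the common
   core [disagreeing_pair], from which the theorem follows at once. *)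

Section Distance.
Context {T : finType} {e : rel T}.

Lemma dist_le_card x y : dist e x y <= #|T|.
Proof. by rewrite /dist -{2}(size_iota 0 #|T|) find_size. Qed.

Lemma dist_le_walk {k x y} : walk_k e k x y -> k < #|T| -> dist e x y <= k.
Proof.
move=> walk_xy k_lt; rewrite /dist -ltnS; apply: find_ltn.
rewrite take_iota; apply/hasP; exists k => //.
by rewrite mem_iota add0n leq0n /= leq_min leqnn k_lt.
Qed.

Lemma walk_dist {x y} : dist e x y < #|T| -> walk_k e (dist e x y) x y.
Proof.
move=> dist_lt.
have has_walk : has (fun k => walk_k e k x y) (iota 0 #|T|).
  by rewrite has_find size_iota.
by have := nth_find 0 has_walk; rewrite nth_iota.
Qed.

Lemma walk0_eq x y : walk_k e 0 x y -> x = y.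
Proof. by move=> /existsP [[[|a s] Hs] /andP [_ /eqP]]. Qed.

Lemma walk1E x y : walk_k e 1 x y = e x y.
Proof.
apply/existsP/idP => [[[[|a [|b s]] Hs] /andP [pth /eqP last_a]] //=|exy].
  by move: pth last_a => /= /andP [exa _] <-.
by exists [tuple y]; rewrite /= exy eqxx.
Qed.

Lemma walk_cons {k x y z} : e x y -> walk_k e k y z -> walk_k e k.+1 x z.
Proof.
move=> exy /existsP [p /andP [pth last_p]]; apply/existsP.
by exists [tuple of y :: p]; rewrite /= exy pth.
Qed.

Lemma dist_eq1 {x y} : x != y -> (dist e x y == 1) = e x y.
Proof.
move=> neq_xy.
have card_gt1 : 1 < #|T|.
  by have := subset_leq_card (subsetT [set x; y]); rewrite cardsT cards2 neq_xy.
apply/eqP/idP => [d1|exy].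
  by rewrite -walk1E -d1; apply: walk_dist; rewrite d1.
have : dist e x y <= 1 by apply: dist_le_walk; rewrite ?walk1E.
case d_xy: (dist e x y) => [|[|n]] // _.
have : walk_k e 0 x y by rewrite -d_xy walk_dist // d_xy ltnW.
by move/walk0_eq/eqP; rewrite (negbTE neq_xy).
Qed.

Lemma dist_edge_le {x y} A : e x y -> dist e x A <= (dist e y A).+1.
Proof.
move=> exy; have := dist_le_card y A; rewrite leq_eqVlt => /orP [/eqP ->|d_lt].
  exact: leq_trans (dist_le_card _ _) (leqnSn _).
have walk_xA := walk_cons exy (walk_dist d_lt).
have [lt_card|ge_card] := ltnP (dist e y A).+1 #|T|.
  exact: dist_le_walk walk_xA lt_card.
exact: leq_trans (dist_le_card _ _) ge_card.
Qed.

End Distance.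

Section Landmarks.
Context {T : finType} {R : seq T}.

Lemma dist_landmark {e1 e2 : rel T} {x A} :
  dvec e1 R x = dvec e2 R x -> A \in R -> dist e1 x A = dist e2 x A.
Proof.
by move=> /eq_in_map same_x A_R; apply: same_x.
Qed.

Lemma edge_to_landmark {e1 e2 : rel T} {x A} :
  x != A -> A \in R -> dvec e1 R x = dvec e2 R x -> e1 x A = e2 x A.
Proof.
move=> neq_xA A_R same_x.
rewrite -(dist_eq1 (e := e1) neq_xA) -(dist_eq1 (e := e2) neq_xA).
by rewrite (dist_landmark same_x A_R).
Qed.

Lemma Delta_dvec {e1 e2 : rel T} {i j} :
  dvec e1 R i = dvec e2 R i -> dvec e1 R j = dvec e2 R j ->
  Delta e1 R i j = Delta e2 R i j.
Proof.
move=> same_i same_j; apply: eq_big_seq => A A_R.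
by rewrite (dist_landmark same_i A_R) (dist_landmark same_j A_R).
Qed.

Lemma Delta_gt0 (e : rel T) i j : resolving e R -> i != j -> 0 < Delta e R i j.
Proof.
move=> resR neq_ij; rewrite lt0n; apply: contra neq_ij => /eqP Delta0.
apply/eqP/resR/eq_in_map => A A_R.
have := leq_bigmax_seq (F := fun A => absdiff (dist e i A) (dist e j A)) A A_R isT.
by rewrite -/(Delta e R i j) Delta0 /absdiff; lia.
Qed.

Lemma Delta_edge_le1 (e : rel T) i j : e i j -> e j i -> Delta e R i j <= 1.
Proof.
move=> eij eji; apply/bigmax_leqP_seq => A _ _.
have := dist_edge_le A eij; have := dist_edge_le A eji; rewrite /absdiff; lia.
Qed.

Lemma disagreeing_pair {e e1 e2 : rel T} {i j} :
  resolving e R -> i != j ->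
  (forall x, dvec e1 R x = dvec e R x) -> (forall x, dvec e2 R x = dvec e R x) ->
  e1 i j = e1 j i -> e2 i j = e2 j i -> e1 i j != e2 i j ->
  [/\ i \notin R, j \notin R & Delta e R i j = 1].
Proof.
move=> resR neq_ij same1 same2 sym1 sym2 differ.
have same12 x : dvec e1 R x = dvec e2 R x by rewrite same1 same2.
have Delta_le1 : Delta e R i j <= 1.
  have [e1ij|e1ij] := boolP (e1 i j).
  - by rewrite -(Delta_dvec (same1 i) (same1 j)) Delta_edge_le1 // -sym1.
  - have e2ij : e2 i j by move: differ; rewrite (negbTE e1ij); case: (e2 i j).
    by rewrite -(Delta_dvec (same2 i) (same2 j)) Delta_edge_le1 // -sym2.
split.
- apply: contra differ => i_R.
  by rewrite sym1 sym2 (edge_to_landmark _ i_R (same12 j)) // eq_sym.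
- by apply: contra differ => j_R; rewrite (edge_to_landmark _ j_R (same12 i)).
- by apply/eqP; rewrite eqn_leq Delta_le1 Delta_gt0.
Qed.

End Landmarks.

Theorem lemma2 (T : finType) (e : rel T) (R : seq T)
  (He : simple_graph e) (Hc : connected_graph e) (HR : resolving e R)
  (i j : T) (Hij : i != j) :
  (invisible e R i j ->
     [/\ i \notin R, j \notin R & Delta e R i j = 1]) /\
  (ambiguous e R i j ->
     [/\ i \notin R, j \notin R & Delta e R i j = 1]).
Proof.
have [sym_e _] := He.
split.
- (* Invisibility: the toggled graph and e disagree on {i,j}. *)
  move=> invis.
  have toggle_ij : toggle e i j i j = ~~ e i j by rewrite /toggle !eqxx.
  have toggle_ji : toggle e i j j i = ~~ e j i by rewrite /toggle !eqxx orbT.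
  apply: (disagreeing_pair HR Hij invis (fun=> erefl)).
  + by rewrite toggle_ij toggle_ji sym_e.
  + exact: sym_e.
  + by rewrite toggle_ij; case: (e i j).
- move=> [e1 [e2 [[[sym1 _] _] [[sym2 _] _] same1 same2 differ]]].
  exact: disagreeing_pair HR Hij same1 same2 (sym1 i j) (sym2 i j) differ.
Qed.
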